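(* Homotopy-initial small bipointed types are unique up to a contractible type of bipointed equivalences: the type $(\Pi A:\mathsf{Bip})(\Pi B:\mathsf{Bip})\big(\mathsf{ishinit}(A)\times\mathsf{ishinit}(B)\to\mathsf{iscontr}(\mathsf{BipEquiv}(A,B))\big)$ is inhabited.
   Context: We work in the intensional Martin-Löf type theory $\mathcal H$ ($\Sigma$, $\Pi$, identity types, a universe $\mathsf U$ à la Russell closed under these, judgemental $\eta$ for $\Pi$, function extensionality; no identity reflection, K or UIP). For paths $p:\mathsf{Id}(a,b)$, $q:\mathsf{Id}(b,c)$, $q\cdot p:\mathsf{Id}(a,c)$ is their composite, $1_a=\mathsf{refl}(a)$, and $h\circ p$ is the action of a function $h$ on $p$. $\mathsf{iscontr}(X)=(\Sigma x:X)(\Pi y:X)\mathsf{Id}_X(x,y)$. A bipointed type is a triple $(A,a_0,a_1)$ with $a_0,a_1:A$; $\mathsf{Bip}=(\Sigma A:\mathsf U)(A\times A)$. For bipointed types $A=(A,a_0,a_1)$, $B=(B,b_0,b_1)$, a bipointed morphism is $(f,\bar f_0,\bar f_1)$ with $f:A\to B$, $\bar f_k:\mathsf{Id}(fa_k,b_k)$; $\mathsf{Bip}(A,B)$ is their type. The composite of $(f,\bar f_0,\bar f_1):A\to B$ and $(g,\bar g_0,\bar g_1):B\to C$ is $(g\circ f,\ \bar g_0\cdot(g\circ\bar f_0),\ \bar g_1\cdot(g\circ\bar f_1))$; the identity is $1_A=(\lambda x.x,1_{a_0},1_{a_1})$. $\mathsf{isbipequiv}(f)=(\Sigma g:\mathsf{Bip}(B,A))\mathsf{Id}_{\mathsf{Bip}(A,A)}(g\circ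 f,1_A)\times(\Sigma h:\mathsf{Bip}(B,A))\mathsf{Id}_{\mathsf{Bip}(B,B)}(f\circ h,1_B)$; $\mathsf{BipEquiv}(A,B)=(\Sigma f:\mathsf{Bip}(A,B))\mathsf{isbipequiv}(f)$. $\mathsf{ishinit}(A)=(\Pi B:\mathsf{Bip})\mathsf{iscontr}(\mathsf{Bip}(A,B))$. *)

(* Plain Rocq (no MathComp): intensional type theory with a proof-relevant
   identity type [Id] living in Type (no UIP/K assumed for it). *)

Inductive Id {A : Type} (a : A) : A -> Type :=
  | refl : Id a a.
Arguments refl {A} a.

Definition concat {A : Type} {a b c : A} (q : Id b c) (p : Id a b) : Id a c :=
  match q in Id _ c' return Id a c' with refl _ => p end.

Definition ap {A B : Type} (h : A -> B) {x y : A} (p : Id x y) : Id (h x) (h y) :=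
  match p in Id _ y' return Id (h x) (h y') with refl _ => refl (h x) end.

Definition iscontr (X : Type) : Type := { x : X & forall y : X, Id x y }.

Definition Bip : Type := { A : Type & (A * A)%type }.

Definition carrier (A : Bip) : Type := projT1 A.
Definition pt0 (A : Bip) : carrier A := fst (projT2 A).
Definition pt1 (A : Bip) : carrier A := snd (projT2 A).

Definition BipHom (A B : Bip) : Type :=
  { f : carrier A -> carrier B &
    (Id (f (pt0 A)) (pt0 B) * Id (f (pt1 A)) (pt1 B))%type }.

Definition bip_comp {A B C : Bip} (g : BipHom B C) (f : BipHom A B) : BipHom A C :=
  existT _ (fun x => projT1 g (projT1 f x))
    (concat (fst (projT2 g)) (ap (projT1 g) (fst (projT2 f))),
     concat (snd (projT2 g)) (ap (projT1 g) (snd (projT2 f)))).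

Definition bip_id (A : Bip) : BipHom A A :=
  existT _ (fun x => x) (refl (pt0 A), refl (pt1 A)).

Definition isbipequiv {A B : Bip} (f : BipHom A B) : Type :=
  ({ g : BipHom B A & Id (bip_comp g f) (bip_id A) } *
   { h : BipHom B A & Id (bip_comp f h) (bip_id B) })%type.

Definition BipEquiv (A B : Bip) : Type := { f : BipHom A B & isbipequiv f }.

Definition ishinit (A : Bip) : Type := forall B : Bip, iscontr (BipHom A B).


(* Every component of [BipEquiv A B] is a hom out of a homotopy-initial
   bipointed type, or a path in such a hom type.  Hom types out of A and B are
   contractible, hence so are their identity types, and a Σ-type of
   contractible fibres over a contractible base is contractible. *)

Definition inv {X : Type} {x y : X} (p : Id x y) : Id y x :=
  match p in Id _ y' return Id y' x with refl _ => refl x end.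

Lemma contr_Id {X : Type} : iscontr X -> forall x y : X, iscontr (Id x y).
Proof.
  intros [c k] x y.
  exists (concat (k y) (inv (k x))).
  intros p; destruct p, (k x).
  exact (refl _).
Defined.

Lemma contr_sigT {X : Type} (P : X -> Type) :
  iscontr X -> (forall x, iscontr (P x)) -> iscontr (sigT P).
Proof.
  intros [c k] HP.
  exists (existT P c (projT1 (HP c))).
  intros [x u].
  destruct (k x), (projT2 (HP c) u).
  exact (refl _).
Defined.

Lemma contr_prod {X Y : Type} : iscontr X -> iscontr Y -> iscontr (X * Y).
Proof.
  intros [x kx] [y ky].
  exists (x, y).
  intros [a b]; destruct (kx a), (ky b).
  exact (refl _).
Defined.

Lemma contr_isbipequiv {A B : Bip} :
  ishinit A -> ishinit B -> forall f : BipHom A B, iscontr (isbipequiv f).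
Proof.
  intros HA HB f.
  apply contr_prod; apply contr_sigT; try exact (HB A).
  - intros g; exact (contr_Id (HA A) _ _).
  - intros h; exact (contr_Id (HB B) _ _).
Defined.

Theorem mainTheorem11 :
  forall A B : Bip, (ishinit A * ishinit B)%type -> iscontr (BipEquiv A B).
Proof.
  intros A B [HA HB].
  apply contr_sigT.
  - exact (HA B).
  - exact (contr_isbipequiv HA HB).
Qed.
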